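(* Let $N\ge1$, $0=\tau_0<\cdots<\tau_N=1$, $\Delta_i=\tau_{i+1}-\tau_i$, $D_2=\sum_i\Delta_i^2$, $0<\omega<1/N$ and $\mathcal W_\omega=\{w\in\mathbb R^N:w_i\ge\omega\ \forall i,\ \sum_iw_i=1\}$. Fix $\varepsilon_a>0$, nonnegative weights $K_\sigma(i,\ell)$ with $\sum_\ell K_\sigma(i,\ell)=1$, numbers $\widehat{\mathcal A}_i\ge0$ and $\mathcal A_i\ge0$. Define $\widehat b_i=\sum_\ell K_\sigma(i,\ell)\sqrt{\widehat{\mathcal A}_\ell+\varepsilon_a}$, $\widehat\phi_i=\widehat b_i^2$, $\widehat w_i=\Delta_i\widehat b_i/\sum_\ell\Delta_\ell\widehat b_\ell$, $b_i^\star=\sum_\ell K_\sigma(i,\ell)\sqrt{\mathcal A_\ell+\varepsilon_a}$, $\phi_i^\star=(b_i^\star)^2$, and $\mathcal J_{\sigma,\varepsilon_a}(w)=\sum_i\phi_i^\star\Delta_i^2/w_i$. Assume $\widehat w\in\mathcal W_\omega$ and let $w^\star_{\sigma,\varepsilon_a}=\arg\min_{w\in\mathcal W_\omega}\mathcal J_{\sigma,\varepsilon_a}(w)$. If $\zeta\ge0$ and $\max_i|\widehat\phi_i-\phi_i^\star|\le\zeta$, then $$\mathcal J_{\sigma,\varepsilon_a}(\widehat w)\le\mathcal J_{\sigma,\varepsilon_a}(w^\star_{\sigma,\varepsilon_a})+\frac{2D_2}{\omega}\zeta.$$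
   Context: In the paper, $\widehat{\mathcal A}_i$ are empirical averages of interval-wise local-error coefficients over calibration trajectories and $\mathcal A_i$ their population means. *)

From mathcomp Require Import all_boot all_order all_algebra.
Set Implicit Arguments. Unset Strict Implicit. Unset Printing Implicit Defensive.
Import Order.TTheory GRing.Theory Num.Theory.
Local Open Scope ring_scope.

Section Defs.
Variables (R : rcfType) (N : nat).

Definition Delta (tau : nat -> R) (i : 'I_N) : R := tau i.+1 - tau i.

Definition D2 (tau : nat -> R) : R := \sum_(i < N) Delta tau i ^+ 2.

Definition Wset (omega : R) (w : 'I_N -> R) : Prop :=
  (forall i, omega <= w i) /\ \sum_(i < N) w i = 1.

Definition bcoef (K : 'I_N -> 'I_N -> R) (A : 'I_N -> R) (eps : R) (i : 'I_N) : R :=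
  \sum_(l < N) K i l * Num.sqrt (A l + eps).

Definition phi (K : 'I_N -> 'I_N -> R) (A : 'I_N -> R) (eps : R) (i : 'I_N) : R :=
  bcoef K A eps i ^+ 2.

Definition what (tau : nat -> R) (K : 'I_N -> 'I_N -> R) (A : 'I_N -> R) (eps : R)
  (i : 'I_N) : R :=
  Delta tau i * bcoef K A eps i / \sum_(l < N) Delta tau l * bcoef K A eps l.

Definition Jobj (tau : nat -> R) (K : 'I_N -> 'I_N -> R) (A : 'I_N -> R) (eps : R)
  (w : 'I_N -> R) : R :=
  \sum_(i < N) phi K A eps i * Delta tau i ^+ 2 / w i.

End Defs.

From mathcomp Require Import all_boot all_order all_algebra.
From mathcomp Require Import ring lra.
Set Implicit Arguments. Unset Strict Implicit. Unset Printing Implicit Defensive.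
Import Order.TTheory GRing.Theory Num.Theory.
Local Open Scope ring_scope.

(* The plug-in weights w^_i, proportional to Delta_i b^_i, minimise by Cauchy-Schwarz
   the empirical objective J^(w) = sum_i phi^_i Delta_i^2 / w_i over the whole
   simplex.  Replacing phi^ by phi_star changes the objective at any w with
   w_i >= omega by at most zeta D2 / omega, so
     J(w^) <= J^(w^) + zeta D2/omega <= J^(w_star) + zeta D2/omega
           <= J(w_star) + 2 zeta D2/omega. *)

Section WeightedCost.
Variables (R : realFieldType) (n : nat).

Definition weighted_cost (p d w : 'I_n -> R) : R :=
  \sum_(i < n) p i * d i ^+ 2 / w i.

Lemma sqr_sum_le_sum_sqr_div (a w : 'I_n -> R) :
  (forall i, 0 < w i) -> \sum_(i < n) w i = 1 ->
  (\sum_(i < n) a i) ^+ 2 <= \sum_(i < n) a i ^+ 2 / w i.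
Proof.
move=> w_gt0 w_sum1; set S := \sum_(i < n) a i.
have termwise i : 2%:R * S * a i - S ^+ 2 * w i <= a i ^+ 2 / w i.
  rewrite -subr_ge0.
  have -> : a i ^+ 2 / w i - (2%:R * S * a i - S ^+ 2 * w i)
            = (a i - S * w i) ^+ 2 / w i by field; rewrite gt_eqF.
  by rewrite divr_ge0 ?sqr_ge0 ?ltW.
apply: le_trans (ler_sum _ (fun i _ => termwise i)).
rewrite sumrB -!mulr_sumr w_sum1 -/S; lra.
Qed.

Lemma weighted_cost_proportional (b d : 'I_n -> R) :
  (forall i, d i * b i != 0) -> \sum_(l < n) d l * b l != 0 ->
  weighted_cost (fun i => b i ^+ 2) d (fun i => d i * b i / \sum_(l < n) d l * b l)
  = (\sum_(l < n) d l * b l) ^+ 2.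
Proof.
move=> db_neq0 S_neq0; rewrite /weighted_cost [in RHS]expr2 [in RHS]mulr_suml.
apply: eq_bigr => i _; field.
by have := db_neq0 i; rewrite mulf_eq0 S_neq0 => /norP[-> ->].
Qed.

Lemma weighted_cost_proportional_min (b d w : 'I_n -> R) :
  (forall i, 0 < w i) -> \sum_(i < n) w i = 1 ->
  (forall i, d i * b i != 0) -> \sum_(l < n) d l * b l != 0 ->
  weighted_cost (fun i => b i ^+ 2) d (fun i => d i * b i / \sum_(l < n) d l * b l)
  <= weighted_cost (fun i => b i ^+ 2) d w.
Proof.
move=> w_gt0 w_sum1 db_neq0 S_neq0; rewrite weighted_cost_proportional //.
have -> : weighted_cost (fun i => b i ^+ 2) d w = \sum_(i < n) (d i * b i) ^+ 2 / w i.
  by apply: eq_bigr => i _; rewrite exprMn [d i ^+ 2 * _]mulrC.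
exact: sqr_sum_le_sum_sqr_div.
Qed.

Lemma weighted_cost_perturb (p q d w : 'I_n -> R) (omega zeta : R) :
  0 < omega -> (forall i, omega <= w i) -> (forall i, `|p i - q i| <= zeta) ->
  weighted_cost p d w
  <= weighted_cost q d w + zeta * (\sum_(i < n) d i ^+ 2) / omega.
Proof.
move=> omega_gt0 w_ge pq_le.
rewrite /weighted_cost mulr_sumr mulr_suml -big_split /=; apply: ler_sum => i _.
have w_gt0 : 0 < w i by apply: lt_le_trans (w_ge i).
have zeta_ge0 : 0 <= zeta by apply: le_trans (normr_ge0 _) (pq_le i).
rewrite -[p i * _ / _]mulrA -[q i * _ / _]mulrA -[zeta * _ / _]mulrA.
set c := d i ^+ 2 / w i.
have c_ge0 : 0 <= c by rewrite divr_ge0 ?sqr_ge0 ?ltW.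
have c_le : c <= d i ^+ 2 / omega.
  by rewrite ler_pdivlMr // mulrAC ler_pdivrMr // ler_wpM2l ?sqr_ge0.
have diff_le : (p i - q i) * c <= zeta * c.
  by apply: ler_wpM2r => //; apply: le_trans (ler_norm _) (pq_le i).
have : zeta * c <= zeta * (d i ^+ 2 / omega) by apply: ler_wpM2l.
rewrite mulrBl in diff_le; lra.
Qed.

End WeightedCost.

Theorem lemma4 (R : rcfType) (N : nat) (tau : nat -> R) (omega eps zeta : R)
  (K : 'I_N -> 'I_N -> R) (Ahat A : 'I_N -> R) (wstar : 'I_N -> R) :
  (1 <= N)%N ->
  tau 0%N = 0 -> tau N = 1 ->
  (forall i : nat, (i < N)%N -> tau i < tau i.+1) ->
  0 < omega -> omega < (N%:R)^-1 ->
  0 < eps ->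
  (forall i l, 0 <= K i l) ->
  (forall i, \sum_(l < N) K i l = 1) ->
  (forall i, 0 <= Ahat i) ->
  (forall i, 0 <= A i) ->
  Wset omega (what tau K Ahat eps) ->
  Wset omega wstar ->
  (forall w, Wset omega w -> Jobj tau K A eps wstar <= Jobj tau K A eps w) ->
  0 <= zeta ->
  (forall i, `|phi K Ahat eps i - phi K A eps i| <= zeta) ->
  Jobj tau K A eps (what tau K Ahat eps)
    <= Jobj tau K A eps wstar + 2%:R * D2 N tau / omega * zeta.
Proof.
move=> N_ge1 _ _ _ omega_gt0 _ _ _ _ _ _ [what_ge _] [wstar_ge wstar_sum1] _ _ phi_le.
set d := @Delta R N tau; set wh := what tau K Ahat eps.
have wh_neq0 i : wh i != 0 by rewrite gt_eqF // (lt_le_trans omega_gt0).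
have db_neq0 i : d i * bcoef K Ahat eps i != 0.
  by have := wh_neq0 i; rewrite mulf_eq0 negb_or => /andP[].
have S_neq0 : \sum_(l < N) d l * bcoef K Ahat eps l != 0.
  by have := wh_neq0 (Ordinal N_ge1); rewrite mulf_eq0 negb_or invr_eq0 => /andP[].
have wh_min : weighted_cost (phi K Ahat eps) d wh
              <= weighted_cost (phi K Ahat eps) d wstar.
  apply: weighted_cost_proportional_min => // i.
  exact: lt_le_trans omega_gt0 (wstar_ge i).
have phi_le' i : `|phi K A eps i - phi K Ahat eps i| <= zeta by rewrite distrC.
have to_hat := weighted_cost_perturb d omega_gt0 what_ge phi_le'.
have from_hat := weighted_cost_perturb d omega_gt0 wstar_ge phi_le.
change (weighted_cost (phi K A eps) d wh <= weighted_cost (phi K A eps) d wstar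
        + 2%:R * (\sum_(i < N) d i ^+ 2) / omega * zeta).
set err := zeta * _ / omega in to_hat from_hat.
have -> : 2%:R * (\sum_(i < N) d i ^+ 2) / omega * zeta = 2%:R * err.
  by rewrite /err; field; rewrite gt_eqF.
lra.
Qed.
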